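(* Let $d>1$, let $I$ be a finite set of hidden neurons, $K$ a finite set of samples with data $\mathbf{x}_k\in\mathbb{R}^d$, $y_k\in\mathbb{R}$, and consider the scalar-output ReLU network $\hat y(\mathbf{P};\mathbf{x})=\sum_{i\in I}h_{j_0i}\max(\mathbf{w}_i\cdot\mathbf{x},0)$ with parameters $\mathbf{P}=(\mathbf{w}_i,h_{j_0i})_{i\in I}\in\mathbb{R}^D$ and loss $\mathcal{L}(\mathbf{P})=\frac12\sum_{k\in K}(\hat y(\mathbf{P};\mathbf{x}_k)-y_k)^2$. Let $\mathbf{P}(t)$, $t\ge0$, satisfy $\frac{d\mathbf{P}}{dt}=-\frac{\partial\mathcal{L}}{\partial\mathbf{P}}$, where in the chain rule the derivative of $\mathrm{ReLU}(x)=\max(x,0)$ is taken to be $\mathbbm{1}_{\{x>0\}}$, with initialization $\mathbf{P}(0)=\sigma\mathbf{A}$ for a fixed arbitrary $\mathbf{A}\in\mathbb{R}^D$ and $\sigma>0$. If $\overline{\mathbf{P}}=(\overline{\mathbf{w}}_i,\overline{h}_{j_0i})_{i\in I}$ is a stationary point of $\mathcal{L}$ that is not a local minimum and $\lim_{\sigma\to0^+}\big(\inf_{t}\|\mathbf{P}(t)-\overline{\mathbf{P}}\|\big)=0$, then there exists $i\in I$ with $\overline{\mathbf{w}}_i=\mathbf{0}$ and $\overline{h}_{j_0i}=0$.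
   Context: A point $\overline{\mathbf{P}}$ is a stationary point of $\mathcal{L}$ if $\lim_{\alpha\to0^+}\frac{\mathcal{L}(\overline{\mathbf{P}}+\alpha\mathbf{d})-\mathcal{L}(\overline{\mathbf{P}})}{\alpha}\ge0$ for all $\mathbf{d}\in\mathbb{R}^D$. The trajectory $\mathbf{P}(t)$ depends on $\sigma$. *)

From mathcomp Require Import all_boot all_order all_algebra all_classical all_reals all_analysis.
Import numFieldNormedType.Exports.
Set Implicit Arguments. Unset Strict Implicit. Unset Printing Implicit Defensive.
Import Order.TTheory GRing.Theory Num.Theory.
Local Open Scope ring_scope.
Local Open Scope classical_set_scope.

(* Parameters P = (w, h): row i of the n x d matrix P.1 is w_i,
   entry (0, i) of the row vector P.2 is h_{j0 i}.  Hidden neurons: I = 'I_n,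
   samples: K = 'I_N. *)
Definition param (R : realType) (n d : nat) := ('M[R]_(n, d) * 'rV[R]_n)%type.

Definition relu (R : realType) (r : R) : R := Num.max r 0.

Definition wdot (R : realType) (n d : nat) (P : param R n d) (i : 'I_n)
  (x : 'rV[R]_d) : R := \sum_(j < d) P.1 i j * x 0 j.

Definition yhat (R : realType) (n d : nat) (P : param R n d) (x : 'rV[R]_d) : R :=
  \sum_(i < n) P.2 0 i * relu (wdot P i x).

Definition loss (R : realType) (n d N : nat) (x : 'I_N -> 'rV[R]_d)
  (y : 'I_N -> R) (P : param R n d) : R :=
  2^-1 * \sum_(k < N) (yhat P (x k) - y k) ^+ 2.

(* Chain-rule "gradient" of L with ReLU'(u) := 1_{u > 0}. *)
Definition gradL (R : realType) (n d N : nat) (x : 'I_N -> 'rV[R]_d)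
  (y : 'I_N -> R) (P : param R n d) : param R n d :=
  (\matrix_(i < n, j < d)
      \sum_(k < N) (yhat P (x k) - y k) * P.2 0 i
                   * (if 0 < wdot P i (x k) then 1 else 0) * x k 0 j,
   \row_(i < n) \sum_(k < N) (yhat P (x k) - y k) * relu (wdot P i (x k))).

(* p : [0, +oo) -> R^D solves dP/dt = -dL/dP for t >= 0
   (two-sided derivative for t > 0, right derivative at t = 0). *)
Definition gradient_flow (R : realType) (n d N : nat) (x : 'I_N -> 'rV[R]_d)
  (y : 'I_N -> R) (p : R -> param R n d) : Prop :=
  (forall t : R, 0 < t -> is_derive t (1 : R) p (- gradL x y (p t))) /\
  ((fun h : R => h^-1 *: (p h - p 0)) @ 0^'+ --> - gradL x y (p 0)).

Definition stationary (R : realType) (n d : nat) (L : param R n d -> R)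
  (Pb : param R n d) : Prop :=
  forall dir : param R n d, exists l : R,
    ((fun a : R => a^-1 * (L (Pb + a *: dir) - L Pb)) @ 0^'+ --> l) /\ 0 <= l.

Definition local_min (R : realType) (n d : nat) (L : param R n d -> R)
  (Pb : param R n d) : Prop :=
  \forall Q \near Pb, L Pb <= L Q.

From mathcomp Require Import all_boot all_order all_algebra all_classical all_reals all_analysis.
From mathcomp Require Import ring lra.
Import numFieldNormedType.Exports.
Import Order.TTheory GRing.Theory Num.Theory.
Local Open Scope ring_scope.
Local Open Scope classical_set_scope.
Set Implicit Arguments. Unset Strict Implicit. Unset Printing Implicit Defensive.

(* A stationary point whose output weights h_i are all nonzero is a local
   minimum.  ReLU is positively homogeneous, so rescaling neuron i of a nearby
   point Q by c_i = h^Q_i / h_i (close to 1) keeps the network unchanged and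
   moves Q to a point that differs from the stationary one only in the
   first-layer weights.  Along that segment no pre-activation changes sign
   except those sitting at the kink, where ReLU is homogeneous, so the loss is a
   quadratic L + a S + a^2 C with C >= 0, and stationarity gives S >= 0.
   Hence some h_i vanishes at the limit point.  With the convention
   ReLU' = 1_{x > 0} one has w_i . dL/dw_i = h_i dL/dh_i, so |w_i|^2 - h_i^2 is
   conserved by the gradient flow and equals sigma^2 times its value at A.  As
   the trajectories come arbitrarily close to the limit point when sigma -> 0,
   this continuous invariant vanishes there, and h_i = 0 forces w_i = 0. *)

Section relu.
Variable R : realType.
Implicit Types u v a c : R.

Lemma ger0_relu u : 0 <= u -> relu u = u.
Proof. by move=> u0; rewrite /relu max_l. Qed.

Lemma ler0_relu u : u <= 0 -> relu u = 0.
Proof. by move=> u0; rewrite /relu max_r. Qed.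

Lemma relu_indicator u : relu u = (if 0 < u then 1 else 0) * u.
Proof.
case: ifP => u0; first by rewrite mul1r ger0_relu ?ltW.
by rewrite mul0r ler0_relu // leNgt u0.
Qed.

Lemma reluMl c u : 0 <= c -> relu (c * u) = c * relu u.
Proof.
move=> c0; have [u0|u0] := leP 0 u; first by rewrite !ger0_relu ?mulr_ge0.
by rewrite (ler0_relu (ltW u0)) mulr0 ler0_relu // mulr_ge0_le0 // ltW.
Qed.

Definition drelu u v : R := if 0 < u then v else if u == 0 then relu v else 0.

Lemma relu_segment u v a : u = 0 \/ `|v| < `|u| -> 0 <= a <= 1 ->
  relu (u + a * v) = relu u + a * drelu u v.
Proof.
move=> uv /andP[a0 a1]; rewrite /drelu.
have [u0|u0|<-] := ltgtP 0 u; last by rewrite (ler0_relu (lexx 0)) !add0r reluMl.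
- case: uv => [u_eq0|/ltr_normlP[]]; first by rewrite u_eq0 ltxx in u0.
  by rewrite gtr0_norm // => ? ?; rewrite !ger0_relu ?ltW //; nra.
- case: uv => [u_eq0|/ltr_normlP[]]; first by rewrite u_eq0 ltxx in u0.
  by rewrite ltr0_norm // => ? ?; rewrite !ler0_relu ?ltW ?mulr0 ?addr0 //; nra.
Qed.

End relu.

Section continuity.
Variables (R : realType) (n d : nat).

Lemma weight_continuous i j : continuous (fun Q : param R n d => Q.1 i j).
Proof.
move=> Q; apply: (@cvg_comp _ _ _ fst (fun M : 'M[R]_(n, d) => M i j)).
  exact: cvg_fst.
exact: coord_continuous.
Qed.

Lemma outweight_continuous i : continuous (fun Q : param R n d => Q.2 0 i).
Proof.
move=> Q; apply: (@cvg_comp _ _ _ snd (fun M : 'rV[R]_n => M 0 i)).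
  exact: cvg_snd.
exact: coord_continuous.
Qed.

Lemma cvg_sum T (F : set_system T) {FF : Filter F} m (f : 'I_m -> T -> R) a :
  (forall j, f j @ F --> a j) -> (fun t => \sum_(j < m) f j t) @ F --> \sum_(j < m) a j.
Proof. by move=> fa; apply: cvg_big => //; exact: add_continuous. Qed.

End continuity.

Section segment.
Variables (R : realType) (n d N : nat) (x : 'I_N -> 'rV[R]_d) (y : 'I_N -> R).
Implicit Types (P Q : param R n d) (V : 'M[R]_(n, d)).

Definition wdir V : param R n d := (V, 0).

Lemma wdotD P Q a i z : wdot (P + a *: Q) i z = wdot P i z + a * wdot Q i z.
Proof.
by rewrite /wdot mulr_sumr -big_split; apply: eq_bigr => j _ /=; rewrite !mxE; ring.
Qed.

Definition kink_safe P V := forall i k,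
  wdot P i (x k) = 0 \/ `|wdot (wdir V) i (x k)| < `|wdot P i (x k)|.

Definition dyhat P V z := \sum_(i < n) P.2 0 i * drelu (wdot P i z) (wdot (wdir V) i z).

Lemma yhat_segment P V a k : kink_safe P V -> 0 <= a <= 1 ->
  yhat (P + a *: wdir V) (x k) = yhat P (x k) + a * dyhat P V (x k).
Proof.
move=> safe a01; rewrite /yhat /dyhat mulr_sumr -big_split; apply: eq_bigr => i _.
by rewrite wdotD relu_segment // /= !mxE; ring.
Qed.

Lemma loss_segment P V a : kink_safe P V -> 0 <= a <= 1 ->
  loss x y (P + a *: wdir V) = loss x y P
    + a * \sum_(k < N) (yhat P (x k) - y k) * dyhat P V (x k)
    + a ^+ 2 * (2^-1 * \sum_(k < N) dyhat P V (x k) ^+ 2).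
Proof.
move=> safe a01; rewrite /loss.
under eq_bigr do rewrite yhat_segment //.
have sqrD k : (yhat P (x k) + a * dyhat P V (x k) - y k) ^+ 2 =
    (yhat P (x k) - y k) ^+ 2 + 2 * a * ((yhat P (x k) - y k) * dyhat P V (x k))
    + a ^+ 2 * dyhat P V (x k) ^+ 2 by ring.
under eq_bigr do rewrite sqrD.
by rewrite !big_split /= -!mulr_sumr; field.
Qed.

Lemma stationary_slope_ge0 P V : stationary (loss x y) P -> kink_safe P V ->
  0 <= \sum_(k < N) (yhat P (x k) - y k) * dyhat P V (x k).
Proof.
move=> st safe; have [l [ql l_ge0]] := st (wdir V).
set S := \sum_(k < N) _; pose C := 2^-1 * \sum_(k < N) dyhat P V (x k) ^+ 2.
suff qS : (fun a => a^-1 * (loss x y (P + a *: wdir V) - loss x y P)) @ 0^'+ --> S.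
  by rewrite -(cvg_unique _ ql qS).
have lin : (fun a => S + a * C) @ 0^'+ --> S + 0 * C.
  by apply: cvgD; [exact: cvg_cst | apply: cvgMr_tmp; exact: cvg_at_right_filter].
rewrite mul0r addr0 in lin; apply: cvg_trans lin.
apply: near_eq_cvg; near=> a.
have a_gt0 : 0 < a by near: a; exact: nbhs_right_gt.
have a_lt1 : a < 1 by near: a; exact: nbhs_right_lt.
by rewrite loss_segment ?ltW ?a_lt1 // /S /C; field; rewrite gt_eqF.
Unshelve. all: by end_near.
Qed.

Lemma kink_safe_near T (F : set_system T) {FF : Filter F} P (V : T -> 'M[R]_(n, d)) :
  (forall i k, wdot (wdir (V t)) i (x k) @[t --> F] --> 0) ->
  \forall t \near F, kink_safe P (V t).
Proof.
move=> V0; apply: filter_forall => i; apply: filter_forall => k.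
have [Pik0|Pik0] := eqVneq (wdot P i (x k)) 0; first by apply: nearW; left.
have Pik_gt0 : 0 < `|wdot P i (x k)| by rewrite normr_gt0.
apply: filterS ((cvgrPdist_lt _ _).1 (V0 i k) _ Pik_gt0) => t.
by rewrite sub0r normrN; right.
Qed.

End segment.

Section local_min.
Variables (R : realType) (n d N : nat) (x : 'I_N -> 'rV[R]_d) (y : 'I_N -> R).
Implicit Types (P Q : param R n d).

Definition rescale (c : 'I_n -> R) Q : param R n d :=
  (\matrix_(i, j) (c i * Q.1 i j), \row_i (Q.2 0 i / c i)).

Lemma yhat_rescale c Q z : (forall i, 0 < c i) -> yhat (rescale c Q) z = yhat Q z.
Proof.
move=> c_gt0; rewrite /yhat; apply: eq_bigr => i _.
have -> : wdot (rescale c Q) i z = c i * wdot Q i z.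
  by rewrite /wdot mulr_sumr; apply: eq_bigr => j _; rewrite !mxE mulrA.
by rewrite reluMl ?ltW // !mxE mulrA divfK // gt_eqF.
Qed.

Lemma loss_rescale c Q : (forall i, 0 < c i) -> loss x y (rescale c Q) = loss x y Q.
Proof. by move=> c_gt0; rewrite /loss; under eq_bigr do rewrite yhat_rescale //. Qed.

Lemma stationary_local_min P : stationary (loss x y) P -> (forall i, P.2 0 i != 0) ->
  local_min (loss x y) P.
Proof.
move=> st P2_neq0.
pose c Q i := Q.2 0 i / P.2 0 i.
(* [rescale (c Q) Q] has the output weights of [P] and the loss of [Q]. *)
pose V Q := (rescale (c Q) Q).1 - P.1.
(* not found by instance search through the [param] alias inside [apply:] *)
have nbhsP : Filter (nbhs P) by exact: _.
have c_cvg i : c Q i @[Q --> P] --> (1 : R).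
  by rewrite -(divff (P2_neq0 i)); apply: cvgMr_tmp; exact: outweight_continuous.
have c_gt0 : \forall Q \near P, forall i, 0 < c Q i.
  apply: (@filter_forall _ _ _ _ nbhsP) => i.
  by apply: filterS ((cvgrPdist_lt _ _).1 (c_cvg i) _ ltr01) => Q /ltr_normlP[]; lra.
have safe : \forall Q \near P, kink_safe x P (V Q).
  apply: (kink_safe_near (FF := nbhsP)) => i k; rewrite /wdot.
  rewrite [X in _ --> X](_ : _ = \sum_(j < d) (1 * P.1 i j - P.1 i j) * x k 0 j).
    2: by rewrite big1 // => j _; rewrite mul1r subrr mul0r.
  apply: (cvg_sum (FF := nbhsP)) => j; under eq_fun do rewrite /= !mxE.
  apply: cvgMr_tmp; apply: cvgB (cvg_cst _).
  exact: cvgM (c_cvg i) (@weight_continuous _ _ _ i j P).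
near=> Q.
have cQ_gt0 : forall i, 0 < c Q i by near: Q.
have safeQ : kink_safe x P (V Q) by near: Q.
have -> : loss x y Q = loss x y (P + 1 *: wdir (V Q)).
  rewrite -(loss_rescale Q cQ_gt0) scale1r; congr loss.
  apply: injective_projections => /=; first by rewrite addrC subrK.
  apply/rowP => i; rewrite !mxE addr0 invf_div mulrC divfK //.
  by apply: contraTneq (cQ_gt0 i) => Q2i0; rewrite /c Q2i0 mul0r ltxx.
rewrite loss_segment ?ler01 ?lexx // expr1n !mul1r.
have := stationary_slope_ge0 st safeQ.
have : 0 <= 2^-1 * \sum_(k < N) dyhat P (V Q) (x k) ^+ 2 :> R.
  by rewrite mulr_ge0 ?invr_ge0 ?ler0n // sumr_ge0 // => k _; exact: sqr_ge0.
lra.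
Unshelve. all: by end_near.
Qed.

End local_min.

Section imbalance.
Variables (R : realType) (n d : nat).
Implicit Types Q : param R n d.

Definition imbalance i Q := \sum_(j < d) Q.1 i j ^+ 2 - Q.2 0 i ^+ 2.

Lemma imbalance_continuous i : continuous (imbalance i).
Proof.
move=> Q; apply: cvgB; first apply: cvg_sum => j.
  apply: (@cvg_comp _ _ _ (fun Q : param R n d => Q.1 i j) (fun r : R => r ^+ 2)).
    exact: weight_continuous.
  exact: exprn_continuous.
apply: (@cvg_comp _ _ _ (fun Q : param R n d => Q.2 0 i) (fun r : R => r ^+ 2)).
  exact: outweight_continuous.
exact: exprn_continuous.
Qed.

Lemma imbalanceZ i a Q : imbalance i (a *: Q) = a ^+ 2 * imbalance i Q.
Proof.
rewrite /imbalance mulrBr mulr_sumr; congr (_ - _); last by rewrite !mxE exprMn.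
by apply: eq_bigr => j _; rewrite !mxE exprMn.
Qed.

Lemma imbalance_eq0 i Q : Q.2 0 i = 0 -> imbalance i Q = 0 -> row i Q.1 = 0.
Proof.
rewrite /imbalance => -> /eqP; rewrite expr0n subr0 psumr_eq0 => [/allP w0|j _].
  apply/rowP => j; rewrite !mxE; apply/eqP.
  by rewrite -sqrf_eq0 (implyP (w0 j _)) ?mem_index_enum.
exact: sqr_ge0.
Qed.

End imbalance.

Section linear_coordinate.
Variables (R : realType) (V : normedModType R) (g : V -> R).
Hypotheses (gB : {morph g : u v / u - v}) (gZ : forall a : R, {morph g : u / a *: u}).
Hypothesis g_cont : continuous g.

Lemma is_derive_linear_comp (p : R -> V) (t : R) (D : V) :
  is_derive t (1 : R) p D -> is_derive t (1 : R) (g \o p) (g D).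
Proof.
move=> [dp <-].
have qg : (fun h => h^-1 *: ((g \o p \o shift t) (h *: 1) - (g \o p) t))
    @ 0^' --> g ('D_1 p t).
  have -> : (fun h => h^-1 *: ((g \o p \o shift t) (h *: 1) - (g \o p) t))
      = g \o (fun h => h^-1 *: ((p \o shift t) (h *: 1) - p t)).
    by apply/funext => h /=; rewrite gZ gB.
  by apply: cvg_comp; [exact: dp | exact: g_cont].
apply: DeriveDef; first by apply/cvg_ex; exists (g ('D_1 p t)).
exact: cvg_lim qg.
Qed.

End linear_coordinate.

Lemma cvg_at_right_of_quotient (R : realType) (V : normedModType R) (p : R -> V) (D : V) :
  (fun h => h^-1 *: (p h - p 0)) @ 0^'+ --> D -> p h @[h --> (0 : R)^'+] --> p 0.
Proof.
move=> qD.
have lin : (fun h => p 0 + h *: (h^-1 *: (p h - p 0))) @ 0^'+ --> p 0 + 0 *: D.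
  by apply: cvgD (cvg_cst _) (cvgZ _ qD); exact: cvg_at_right_filter.
rewrite scale0r addr0 in lin; apply: cvg_trans lin.
apply: near_eq_cvg; near=> h.
have h_gt0 : 0 < h by near: h; exact: nbhs_right_gt.
by rewrite scalerA divff ?gt_eqF // scale1r addrC subrK.
Unshelve. all: by end_near.
Qed.

Section flow_invariance.
Variables (R : realType) (n d N : nat) (x : 'I_N -> 'rV[R]_d) (y : 'I_N -> R).
Implicit Types (Q : param R n d) (p : R -> param R n d).

Lemma gradL_balanced Q i :
  \sum_(j < d) Q.1 i j * (gradL x y Q).1 i j = Q.2 0 i * (gradL x y Q).2 0 i.
Proof.
rewrite /gradL /=; under eq_bigr do rewrite mxE mulr_sumr.
rewrite exchange_big mxE mulr_sumr; apply: eq_bigr => k _.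
rewrite relu_indicator /wdot !mulr_sumr; apply: eq_bigr => j _.
by move: (if _ then _ else _) => b; ring.
Qed.

Lemma is_derive_imbalance p i (t : R) : is_derive t 1 p (- gradL x y (p t)) ->
  is_derive t 1 (imbalance i \o p) 0.
Proof.
move=> dp.
have dw j : is_derive t 1 (fun s => (p s).1 i j) ((- gradL x y (p t)).1 i j).
  apply: (is_derive_linear_comp (g := fun Q : param R n d => Q.1 i j)) dp.
  - by move=> u v /=; rewrite !mxE.
  - by move=> a u /=; rewrite !mxE.
  - exact: weight_continuous.
have dh : is_derive t 1 (fun s => (p s).2 0 i) ((- gradL x y (p t)).2 0 i).
  apply: (is_derive_linear_comp (g := fun Q : param R n d => Q.2 0 i)) dp.
  - by move=> u v /=; rewrite !mxE.
  - by move=> a u /=; rewrite !mxE.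
  - exact: outweight_continuous.
have -> : imbalance i \o p = \sum_(j < d) (fun s => (p s).1 i j) * (fun s => (p s).1 i j)
    - (fun s => (p s).2 0 i) * (fun s => (p s).2 0 i).
  by apply/funext => s; rewrite /imbalance /= fct_sumE; under eq_bigr do rewrite expr2.
apply: is_derive_eq.
have E (a b : R) : a *: b + a *: b = 2 * (a * b) by rewrite -[a *: b]/(a * b); ring.
have oppw (Q : param R n d) j : (- Q).1 i j = - Q.1 i j by rewrite /= mxE.
have opph (Q : param R n d) : (- Q).2 0 i = - Q.2 0 i by rewrite /= mxE.
under eq_bigr do rewrite E oppw mulrN.
by rewrite E opph mulrN -mulr_sumr sumrN gradL_balanced subrr.
Qed.

Lemma gradient_flow_imbalance p i : gradient_flow x y p ->
  forall t, 0 <= t -> imbalance i (p t) = imbalance i (p 0).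
Proof.
move=> [flow flow0].
have const s t : 0 < s -> s <= t -> imbalance i (p t) = imbalance i (p s).
  move=> s_gt0 st.
  have deriv0 z : z \in `]s, t[%R -> is_derive z 1 (imbalance i \o p) 0.
    by rewrite in_itv /= => /andP[sz _]; apply/is_derive_imbalance/flow/(lt_trans s_gt0).
  have cont : {within `[s, t], continuous (imbalance i \o p)}.
    apply: derivable_within_continuous => z; rewrite in_itv /= => /andP[sz _].
    by have [] := is_derive_imbalance i (flow z (lt_le_trans s_gt0 sz)).
  have [c _] := MVT_segment st deriv0 cont.
  by rewrite mul0r => /eqP; rewrite subr_eq0 => /eqP.
have const1 t : 0 < t -> imbalance i (p t) = imbalance i (p 1).
  by move=> t_gt0; have [/const->|/ltW/const<-] := leP 1 t.
have lim0 : imbalance i (p h) @[h --> 0^'+] --> imbalance i (p 0).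
  apply: cvg_comp; [exact: cvg_at_right_of_quotient flow0 | exact: imbalance_continuous].
have lim1 : imbalance i (p h) @[h --> 0^'+] --> imbalance i (p 1).
  have near1 : \forall h \near 0^'+, imbalance i (p 1) = imbalance i (p h).
    by near=> h; rewrite const1 //; near: h; exact: nbhs_right_gt.
  by apply: cvg_trans; [exact: near_eq_cvg near1 | exact: cvg_cst].
move=> t; rewrite le_eqVlt => /predU1P[<- //|t_gt0].
by rewrite const1 // (cvg_unique _ lim0 lim1).
Unshelve. all: by end_near.
Qed.

End flow_invariance.

Lemma limit_point_invariant (R : realType) (V : normedModType R) (f : V -> R)
    (g : R -> R) (P : R -> R -> V) (Pbar : V) :
  {for Pbar, continuous f} ->
  (forall s, 0 < s -> forall t, 0 <= t -> f (P s t) = g s) ->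
  g s @[s --> 0^'+] --> 0 ->
  inf [set `|P s t - Pbar| | t in [set t : R | 0 <= t]] @[s --> 0^'+] --> 0 ->
  f Pbar = 0.
Proof.
move=> f_cont fP g0 dist0; apply/eqP/negPn/negP => fPbar_neq0.
have e_gt0 : 0 < `|f Pbar| / 2 by rewrite divr_gt0 // normr_gt0.
have [r r_gt0 near_f] := (nbhs_ballP _ _).1 ((cvgrPdist_lt _ _).1 f_cont _ e_gt0).
have near_s : \forall s \near 0^'+, [/\ 0 < s, `|g s| < `|f Pbar| / 2 &
    inf [set `|P s t - Pbar| | t in [set t : R | 0 <= t]] < r].
  near=> s; split.
  - by near: s; exact: nbhs_right_gt.
  - by rewrite -[g s]opprK normrN -sub0r; near: s; exact: (cvgrPdist_lt _ _).1 g0 _ e_gt0.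
  - apply: le_lt_trans (ler_norm _) _; rewrite -normrN -sub0r.
    by near: s; exact: (cvgrPdist_lt _ _).1 dist0 _ r_gt0.
have [s [s_gt0 gs_small dist_small]] := filter_ex near_s.
have dists_neq0 : [set `|P s t - Pbar| | t in [set t : R | 0 <= t]] !=set0.
  by exists `|P s 0 - Pbar|; exists 0 => //=; rewrite lexx.
have [_ [t t_ge0 <-] dist_t] := inf_lt dists_neq0 dist_small.
have := near_f (P s t); rewrite -ball_normE /= distrC fP // => /(_ dist_t) fPbar_close.
have := ler_normD (f Pbar - g s) (g s); rewrite subrK; lra.
Unshelve. all: by end_near.
Qed.

Theorem corollary2 (R : realType) (d n N : nat) (hd : (1 < d)%N)
  (x : 'I_N -> 'rV[R]_d) (y : 'I_N -> R) (A : param R n d)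
  (P : R -> R -> param R n d) (Pbar : param R n d) :
  (forall sigma : R, 0 < sigma ->
     gradient_flow x y (P sigma) /\ P sigma 0 = sigma *: A) ->
  stationary (loss x y) Pbar ->
  ~ local_min (loss x y) Pbar ->
  (fun sigma : R => inf [set `|P sigma t - Pbar| | t in [set t : R | 0 <= t]])
     @ 0^'+ --> (0 : R) ->
  exists i : 'I_n, row i Pbar.1 = 0 /\ Pbar.2 0 i = 0.
Proof.
move=> flow st not_min dist0.
have [i /eqP h0|h_neq0] := pickP (fun i => Pbar.2 0 i == 0); last first.
  by case: not_min; apply: stationary_local_min st _ => i; rewrite h_neq0.
exists i; split => //; apply: imbalance_eq0 h0 _.
apply: (limit_point_invariant (@imbalance_continuous _ _ _ i Pbar) _ _ dist0).
- move=> s s_gt0 t t_ge0; have [flow_s P_s0] := flow s s_gt0.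
  by rewrite (gradient_flow_imbalance i flow_s t_ge0) P_s0 imbalanceZ.
- rewrite [X in _ --> X](_ : _ = 0 ^+ 2 * imbalance i A); last by rewrite expr0n mul0r.
  by apply: cvgMr_tmp; apply: cvg_at_right_filter; exact: exprn_continuous.
Qed.
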